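(* Let $\mathcal{E}$ be an ellipse in a Euclidean plane, let $c$ be a chord of $\mathcal{E}$, and let $g$ be an affine bijection of the plane. Consider the three properties: (1) a chord of $\mathcal{E}$ parallel to $c$ and passing through a focus of $\mathcal{E}$ is sent by $g$ onto a chord of $g(\mathcal{E})$ passing through a focus of $g(\mathcal{E})$; (2) the length of $c$ is preserved, i.e. $g(c)$ has the same length as $c$; (3) the length of the major axis is preserved, i.e. $g(\mathcal{E})$ has the same major axis length as $\mathcal{E}$. Then any two of these three properties imply the remaining one. *)

From HB Require Import structures.
From mathcomp Require Import all_boot all_order all_algebra.
Set Implicit Arguments. Unset Strict Implicit. Unset Printing Implicit Defensive.
Import Order.TTheory GRing.Theory Num.Theory.
Local Open Scope ring_scope.

Notation point R := 'rV[R]_2.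

Definition dist {R : rcfType} (p q : point R) : R :=
  Num.sqrt (\sum_(i < 2) (p ord0 i - q ord0 i) ^+ 2).

(* The ellipse with foci F1, F2 and semi-major axis a (requires dist F1 F2 < 2a);
   circles are the case F1 = F2. *)
Definition ellipse {R : rcfType} (F1 F2 : point R) (a : R) : point R -> Prop :=
  fun P => dist P F1 + dist P F2 = 2 * a.

Definition is_ellipse_with {R : rcfType} (S : point R -> Prop) (F1 F2 : point R) (a : R) : Prop :=
  dist F1 F2 < 2 * a /\ forall P, S P <-> ellipse F1 F2 a P.

Definition is_focus {R : rcfType} (S : point R -> Prop) (F : point R) : Prop :=
  exists F' a, is_ellipse_with S F F' a.

Definition major_axis_length {R : rcfType} (S : point R -> Prop) (L : R) : Prop :=
  exists F1 F2, is_ellipse_with S F1 F2 (L / 2).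

Definition affine_map {R : rcfType} (A : 'M[R]_2) (b : point R) (x : point R) : point R :=
  x *m A + b.

Definition image_set {R : rcfType} (g : point R -> point R) (S : point R -> Prop) : point R -> Prop :=
  fun y => exists x, S x /\ y = g x.

Definition on_segment {R : rcfType} (u v x : point R) : Prop :=
  exists t : R, 0 <= t <= 1 /\ x = (1 - t) *: u + t *: v.

Definition is_chord {R : rcfType} (S : point R -> Prop) (u v : point R) : Prop :=
  S u /\ S v /\ u != v.

Definition parallel {R : rcfType} (w1 w2 : point R) : Prop :=
  exists k : R, w1 = k *: w2.

(* Centre the ellipse with foci F, F' and semi-major axis a at C = (F + F')/2 and put
   w = (F - F')/2, b^2 = a^2 - |w|^2; then C + z lies on it iff Q z = a^2 b^2, where
   Q z = a^2 |z|^2 - (z.w)^2.  The roots t1, t2 of the quadratic cutting the line Y + t e give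
   (t2 - t1)^2 (Q e)^2 = 4 a^2 b^2 (Q e - [Y - C, e]^2) with [u, v] the cross product, so a chord
   of direction e is determined by its offset [Y - C, e], and the focal chords are exactly those with
   (t2 - t1)^2 (Q e)^2 = 4 a^2 b^4 |e|^2.
   An affine map g x = x A + b sends the centre of E to the centre of g E (each is the unique
   centre of symmetry), hence diameters to diameters, which gives Q'(e A) a^2 b^2 = Q(e) a'^2 b'^2
   for the data a', b', Q' of g E.  So a focal chord of E of direction e is mapped onto a focal
   chord of g E iff a'^2 |e|^2 = a^2 |e A|^2.  For e = q - p, property (2) reads |e A| = |e| and
   property (3) reads a' = a, and any two of the three statements imply the third. *)

From HB Require Import structures.
From mathcomp Require Import all_boot all_order all_algebra.
From mathcomp Require Import ring lra.
Set Implicit Arguments. Unset Strict Implicit. Unset Printing Implicit Defensive.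
Import Order.TTheory GRing.Theory Num.Theory.
Local Open Scope ring_scope.

Section PlaneForms.
Variable R : comNzRingType.
Implicit Types (u v w y z e : point R) (A : 'M[R]_2) (a t : R).

Definition px u := u 0 0.
Definition py u := u 0 1.

Lemma sum_ord2 (f : 'I_2 -> R) : \sum_(i < 2) f i = f 0 + f 1.
Proof. by rewrite big_ord_recl big_ord1; congr (_ + f _); apply: val_inj. Qed.

Lemma point_eq u v : px u = px v -> py u = py v -> u = v.
Proof.
move=> ex ey; apply/rowP => -[[|[|//]] lt_j2].
  by rewrite (_ : Ordinal _ = 0) //; apply: val_inj.
by rewrite (_ : Ordinal _ = 1) //; apply: val_inj.
Qed.

Lemma pxD u v : px (u + v) = px u + px v. Proof. by rewrite /px mxE. Qed.
Lemma pyD u v : py (u + v) = py u + py v. Proof. by rewrite /py mxE. Qed.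
Lemma pxN u : px (- u) = - px u. Proof. by rewrite /px mxE. Qed.
Lemma pyN u : py (- u) = - py u. Proof. by rewrite /py mxE. Qed.
Lemma pxZ t u : px (t *: u) = t * px u. Proof. by rewrite /px mxE. Qed.
Lemma pyZ t u : py (t *: u) = t * py u. Proof. by rewrite /py mxE. Qed.
Lemma pxM u A : px (u *m A) = px u * A 0 0 + py u * A 1 0.
Proof. by rewrite /px /py mxE sum_ord2. Qed.
Lemma pyM u A : py (u *m A) = px u * A 0 1 + py u * A 1 1.
Proof. by rewrite /px /py mxE sum_ord2. Qed.
Lemma px0 : px (0 : point R) = 0. Proof. by rewrite /px mxE. Qed.
Lemma py0 : py (0 : point R) = 0. Proof. by rewrite /py mxE. Qed.

Definition coordE := (pxD, pyD, pxN, pyN, pxZ, pyZ, pxM, pyM, px0, py0).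

Definition dot u v := px u * px v + py u * py v.
Definition cross u v := px u * py v - py u * px v.
Definition nrm2 u := dot u u.

Lemma dot_cross_lagrange u v : dot u v ^+ 2 + cross u v ^+ 2 = nrm2 u * nrm2 v.
Proof. by rewrite /nrm2 /dot /cross; ring. Qed.

Lemma nrm2N u : nrm2 (- u) = nrm2 u.
Proof. by rewrite /nrm2 /dot !coordE; ring. Qed.

Lemma nrm2Z t u : nrm2 (t *: u) = t ^+ 2 * nrm2 u.
Proof. by rewrite /nrm2 /dot !coordE; ring. Qed.

Lemma crossBl u v e : cross (u - v) e = cross u e - cross v e.
Proof. by rewrite /cross !coordE; ring. Qed.

Lemma crossNl u e : cross (- u) e = - cross u e.
Proof. by rewrite /cross !coordE; ring. Qed.

Lemma crossZl t u e : cross (t *: u) e = t * cross u e.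
Proof. by rewrite /cross !coordE; ring. Qed.

Lemma crossC u v : cross u v = - cross v u.
Proof. by rewrite /cross; ring. Qed.

Lemma crossvv u : cross u u = 0.
Proof. by rewrite /cross; ring. Qed.

Definition ell_form a w z := a ^+ 2 * nrm2 z - dot z w ^+ 2.
Definition ell_polar a w y e := a ^+ 2 * dot y e - dot y w * dot e w.
Definition minor2 a w := a ^+ 2 - nrm2 w.

Lemma ell_formN a w z : ell_form a w (- z) = ell_form a w z.
Proof. by rewrite /ell_form /nrm2 /dot !coordE; ring. Qed.

Lemma ell_formZ a w t z : ell_form a w (t *: z) = t ^+ 2 * ell_form a w z.
Proof. by rewrite /ell_form /nrm2 /dot !coordE; ring. Qed.

Lemma ell_form_line a w y e t :
  ell_form a w (y + t *: e) =
  ell_form a w e * t ^+ 2 + 2 * ell_polar a w y e * t + ell_form a w y.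
Proof. by rewrite /ell_form /ell_polar /nrm2 /dot !coordE; ring. Qed.

Lemma ell_form_cross a w z : ell_form a w z = minor2 a w * nrm2 z + cross z w ^+ 2.
Proof. by rewrite /ell_form /minor2 /nrm2 /dot /cross; ring. Qed.

Lemma ell_polar_discr a w y e :
  ell_polar a w y e ^+ 2 - ell_form a w y * ell_form a w e =
  - (a ^+ 2 * minor2 a w) * cross y e ^+ 2.
Proof. by rewrite /ell_polar /ell_form /minor2 /nrm2 /dot /cross; ring. Qed.

End PlaneForms.

Lemma quadratic_roots (R : idomainType) (al be ga t1 t2 : R) : t1 != t2 ->
  al * t1 ^+ 2 + be * t1 + ga = 0 -> al * t2 ^+ 2 + be * t2 + ga = 0 ->
  (t2 - t1) ^+ 2 * al ^+ 2 = be ^+ 2 - 4 * al * ga /\ al * (t1 * t2) = ga.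
Proof.
move=> t12 root1 root2.
have : (t1 - t2) * (al * (t1 + t2) + be) = 0.
  transitivity ((al * t1 ^+ 2 + be * t1 + ga) - (al * t2 ^+ 2 + be * t2 + ga)); first by ring.
  by rewrite root1 root2 subrr.
move/eqP; rewrite mulf_eq0 subr_eq0 (negbTE t12) /= addr_eq0 => /eqP sum12.
have be_eq : be = - (al * (t1 + t2)) by rewrite sum12 opprK.
have prod12 : al * (t1 * t2) = ga.
  by apply: (addrI (al * t1 ^+ 2 + be * t1)); rewrite root1 be_eq; ring.
by split; rewrite // -prod12 be_eq; ring.
Qed.

Section RealPlane.
Variable R : rcfType.
Implicit Types (u v e P : point R) (t : R).

Lemma nrm2_ge0 u : 0 <= nrm2 u.
Proof. by rewrite /nrm2 /dot; nra. Qed.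

Lemma nrm2_gt0 u : u != 0 -> 0 < nrm2 u.
Proof.
move=> u_neq0; rewrite lt_def nrm2_ge0 andbT; apply: contra u_neq0 => /eqP u0.
have [x0 y0] : px u = 0 /\ py u = 0.
  by move: u0; rewrite /nrm2 /dot; split; nra.
by apply/eqP; apply: point_eq; rewrite coordE.
Qed.

Lemma dist_nrm2 u v : dist u v = Num.sqrt (nrm2 (u - v)).
Proof. by rewrite /dist sum_ord2 /nrm2 /dot !coordE. Qed.

Lemma quadratic_roots_opposite (al be ga : R) : 0 < al -> ga < 0 ->
  exists t1 t2, [/\ t1 < 0, 0 < t2,
    al * t1 ^+ 2 + be * t1 + ga = 0 & al * t2 ^+ 2 + be * t2 + ga = 0].
Proof.
move=> al_gt0 ga_lt0.
have discr_gt : be ^+ 2 < be ^+ 2 - 4 * al * ga by nra.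
set s := Num.sqrt (be ^+ 2 - 4 * al * ga).
have s2 : s ^+ 2 = be ^+ 2 - 4 * al * ga by rewrite sqr_sqrtr //; nra.
have s_ge0 : 0 <= s := sqrtr_ge0 _.
have [s_gt_be s_gt_Nbe] : be < s /\ - be < s by split; nra.
have root t : t = (- be + s) / (2 * al) \/ t = (- be - s) / (2 * al) ->
    al * t ^+ 2 + be * t + ga = 0.
  have al_neq0 : al != 0 by rewrite gt_eqF.
  move=> t_root.
  suff -> : al * t ^+ 2 + be * t + ga = (s ^+ 2 - (be ^+ 2 - 4 * al * ga)) / (4 * al).
    by rewrite s2 subrr mul0r.
  by case: t_root => ->; field.
exists ((- be - s) / (2 * al)), ((- be + s) / (2 * al)); split; try by apply: root; auto.
  by rewrite pmulr_llt0 ?invr_gt0 ?mulr_gt0 //; lra.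
by rewrite pmulr_rgt0 ?invr_gt0 ?mulr_gt0 //; lra.
Qed.

Lemma on_segment_line P e s1 s2 : s1 <= 0 -> 0 <= s2 -> s1 < s2 ->
  on_segment (P + s1 *: e) (P + s2 *: e) P.
Proof.
move=> s1_le0 s2_ge0 s12; have s21_neq0 : s2 - s1 != 0 by rewrite subr_eq0 gt_eqF.
exists (- s1 / (s2 - s1)); split.
  by rewrite divr_ge0 ?ler_pdivrMr ?subr_gt0 //=; lra.
by apply: point_eq; rewrite !coordE; field.
Qed.

Lemma on_segment_decomp u v P : on_segment u v P ->
  exists t, u = P + (- t) *: (v - u) /\ v = P + (1 - t) *: (v - u).
Proof. by case=> t [_ ->]; exists t; split; apply: point_eq; rewrite !coordE; ring. Qed.

Lemma cross_eq0_collinear u e : e != 0 -> cross u e = 0 -> exists t, u = t *: e.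
Proof.
move=> e_neq0 cross0; have n_neq0 : nrm2 e != 0 by rewrite gt_eqF ?nrm2_gt0.
exists (dot u e / nrm2 e).
have [ex ey] : px u - dot u e / nrm2 e * px e = py e * cross u e / nrm2 e /\
                py u - dot u e / nrm2 e * py e = - px e * cross u e / nrm2 e.
  by move: n_neq0; rewrite /nrm2 /dot /cross => ?; split; field.
rewrite cross0 !(mulr0, mul0r) in ex ey.
by apply: point_eq; apply/eqP; rewrite !coordE -subr_eq0 ?ex ?ey.
Qed.

End RealPlane.

Section EllipseEquation.
Variable R : rcfType.
Implicit Types (u v w z : point R) (a : R).

Lemma sum_dist_ell_formP a w z : 0 < a -> nrm2 w < a ^+ 2 ->
  Num.sqrt (nrm2 (z - w)) + Num.sqrt (nrm2 (z + w)) = 2 * a <->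
  ell_form a w z = a ^+ 2 * minor2 a w.
Proof.
move=> a_gt0 w_lt; set t := dot z w; have a_neq0 : a != 0 by rewrite gt_eqF.
have nrm2_zBw : nrm2 (z - w) = nrm2 z - 2 * t + nrm2 w.
  by rewrite /t /nrm2 /dot !coordE; ring.
have nrm2_zDw : nrm2 (z + w) = nrm2 z + 2 * t + nrm2 w.
  by rewrite /t /nrm2 /dot !coordE; ring.
rewrite /ell_form /minor2 -/t; split => [sum_2a | ell].
  set r1 := Num.sqrt _ in sum_2a; set r2 := Num.sqrt _ in sum_2a.
  have r1_2 : r1 ^+ 2 = nrm2 (z - w) by rewrite sqr_sqrtr ?nrm2_ge0.
  have r2_2 : r2 ^+ 2 = nrm2 (z + w) by rewrite sqr_sqrtr ?nrm2_ge0.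
  have r2E : r2 = 2 * a - r1 by rewrite -sum_2a; ring.
  have r1E : a * r1 = a ^+ 2 - t.
    have : r2 ^+ 2 - r1 ^+ 2 = 4 * t by rewrite r1_2 r2_2 nrm2_zBw nrm2_zDw; ring.
    by rewrite r2E; nra.
  have : (a * r1) ^+ 2 = a ^+ 2 * nrm2 (z - w) by rewrite exprMn r1_2.
  by rewrite r1E nrm2_zBw; nra.
have m_gt0 : 0 < a ^+ 2 - nrm2 w by rewrite subr_gt0.
have z_le : nrm2 z <= a ^+ 2.
  have := ell_form_cross a w z; rewrite /ell_form /minor2 ell.
  have := sqr_ge0 (cross z w); nra.
have [t_le Nt_le] : t <= a ^+ 2 /\ - a ^+ 2 <= t.
  have := dot_cross_lagrange z w; have := sqr_ge0 (cross z w).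
  have := nrm2_ge0 z; have := nrm2_ge0 w; rewrite -/t; split; nra.
have nrm2_zE : nrm2 z = (t ^+ 2 + a ^+ 2 * (a ^+ 2 - nrm2 w)) / a ^+ 2.
  by rewrite -ell; field.
have sqrt_sqrE (x : R) : 0 <= x -> Num.sqrt (x ^+ 2) = x.
  by move=> x_ge0; rewrite sqrtr_sqr ger0_norm.
rewrite (_ : nrm2 (z - w) = ((a ^+ 2 - t) / a) ^+ 2); last first.
  by rewrite nrm2_zBw nrm2_zE; field.
rewrite (_ : nrm2 (z + w) = ((a ^+ 2 + t) / a) ^+ 2); last first.
  by rewrite nrm2_zDw nrm2_zE; field.
rewrite !sqrt_sqrE ?divr_ge0 ?(ltW a_gt0) //; try lra.
by field.
Qed.

Definition center (F F' : point R) : point R := 2^-1 *: (F + F').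
Definition focal_vec (F F' : point R) : point R := 2^-1 *: (F - F').

Lemma center_add_focal (F F' : point R) : center F F' + focal_vec F F' = F.
Proof. by apply: point_eq; rewrite !coordE; field. Qed.

Lemma center_sub_focal (F F' : point R) : center F F' - focal_vec F F' = F'.
Proof. by apply: point_eq; rewrite !coordE; field. Qed.

Lemma distC u v : dist u v = dist v u.
Proof. by rewrite !dist_nrm2 -opprB nrm2N. Qed.

Lemma is_ellipse_with_swap (S : point R -> Prop) (F F' : point R) a :
  is_ellipse_with S F F' a -> is_ellipse_with S F' F a.
Proof. by case=> lt_dist memS; split=> [|P]; rewrite 1?distC // memS /ellipse addrC. Qed.

End EllipseEquation.

Section Ellipse.
Variable R : rcfType.
Variables (S : point R -> Prop) (F F' : point R) (a : R).
Hypothesis hS : is_ellipse_with S F F' a.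
Implicit Types (P X Y Z e v : point R) (t : R).

Local Notation C := (center F F').
Local Notation w := (focal_vec F F').
Local Notation m := (minor2 a w).

Lemma focus_sub_center : F - C = w.
Proof. by rewrite -{1}(center_add_focal F F') addrC addKr. Qed.

Lemma focus'_sub_center : F' - C = - w.
Proof. by rewrite -{1}(center_sub_focal F F') addrC addKr. Qed.

Lemma ellipse_axis_bounds : 0 < a /\ nrm2 w < a ^+ 2.
Proof.
have [+ _] := hS; rewrite dist_nrm2 (_ : F - F' = 2 *: w) ?(nrm2Z 2 w); last first.
  by apply: point_eq; rewrite !coordE; field.
have := nrm2_ge0 w; set s := Num.sqrt _.
have s2 : s ^+ 2 = 2 ^+ 2 * nrm2 w by rewrite /s sqr_sqrtr // mulr_ge0 ?sqr_ge0 ?nrm2_ge0.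
have := sqrtr_ge0 (2 ^+ 2 * nrm2 w); rewrite -/s; split; nra.
Qed.

Lemma ellipse_a_gt0 : 0 < a. Proof. by case: ellipse_axis_bounds. Qed.

Lemma ellipse_minor2_gt0 : 0 < m.
Proof. by rewrite subr_gt0; case: ellipse_axis_bounds. Qed.

Lemma ellipse_memP Z : S Z <-> ell_form a w (Z - C) = a ^+ 2 * m.
Proof.
have [a_gt0 w_lt] := ellipse_axis_bounds; have [_ ->] := hS.
rewrite -(sum_dist_ell_formP _ a_gt0 w_lt) /ellipse !dist_nrm2.
rewrite -[in Z - F](center_add_focal F F') -[in Z - F'](center_sub_focal F F').
by rewrite !opprD opprK !addrA.
Qed.

Lemma ellipse_line_memP Y e t : S (Y + t *: e) <->
  ell_form a w e * t ^+ 2 + 2 * ell_polar a w (Y - C) e * t +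
  (ell_form a w (Y - C) - a ^+ 2 * m) = 0.
Proof.
rewrite ellipse_memP addrAC ell_form_line; split=> [ell | root].
  by rewrite -ell; ring.
by apply/eqP; rewrite -subr_eq0 -root; apply/eqP; ring.
Qed.

Lemma ellipse_form_gt0 e : e != 0 -> 0 < ell_form a w e.
Proof.
move=> e_neq0; rewrite ell_form_cross.
have := nrm2_gt0 e_neq0; have := sqr_ge0 (cross e w); have := ellipse_minor2_gt0; nra.
Qed.

Lemma ellipse_focus_inner : ell_form a w w < a ^+ 2 * m.
Proof.
rewrite ell_form_cross crossvv expr0n addr0 mulrC ltr_pM2r ?ellipse_minor2_gt0 //.
by case: ellipse_axis_bounds.
Qed.

Lemma ellipse_sym Z : S Z -> S (F + F' - Z).
Proof.
rewrite !ellipse_memP (_ : F + F' - Z - C = - (Z - C)) ?ell_formN //.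
by apply: point_eq; rewrite !coordE; field.
Qed.

Lemma ellipse_collinear3_eq0 Z v : S Z -> S (Z + v) -> S (Z + 2 *: v) -> v = 0.
Proof.
move=> SZ SZv SZ2v; have [// | v_neq0] := eqVneq v 0.
have S0 : S (Z + 0 *: v) by rewrite scale0r addr0.
have S1 : S (Z + 1 *: v) by rewrite scale1r.
by move: S0 S1 SZ2v (ellipse_form_gt0 v_neq0); rewrite !ellipse_line_memP => *; exfalso; lra.
Qed.

Lemma ellipse_center_unique P Z0 : S Z0 -> (forall Z, S Z -> S (P - Z)) -> P = F + F'.
Proof.
move=> SZ0 symP; set v := F + F' - P.
have SZ0v : S (Z0 + v).
  by have := ellipse_sym (symP _ SZ0); congr S; apply: point_eq; rewrite !coordE; ring.
have SZ02v : S (Z0 + 2 *: v).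
  by have := ellipse_sym (symP _ SZ0v); congr S; apply: point_eq; rewrite !coordE; ring.
by have /eqP := ellipse_collinear3_eq0 SZ0 SZ0v SZ02v; rewrite subr_eq0 eq_sym => /eqP.
Qed.

Lemma ellipse_nrm2_le Z : S Z -> nrm2 (Z - C) <= a ^+ 2.
Proof.
rewrite ellipse_memP ell_form_cross => ell.
have := sqr_ge0 (cross (Z - C) w); have := ellipse_minor2_gt0; nra.
Qed.

Lemma ellipse_vertex : exists Z, S Z /\ nrm2 (Z - C) = a ^+ 2.
Proof.
(* A vertex lies on the focal axis, which is any line through [C] when [w = 0]. *)
have [u [u_neq0 cross_uw]] : exists u : point R, u != 0 /\ cross u w = 0.
  case: (eqVneq w 0) => [-> | w_neq0]; last by exists w; rewrite crossvv.
  exists (const_mx 1); split; last by rewrite /cross !coordE; ring.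
  by apply/eqP => /rowP /(_ 0) /eqP; rewrite !mxE oner_eq0.
have u_gt0 := nrm2_gt0 u_neq0.
set k := a / Num.sqrt (nrm2 u).
have k2 : k ^+ 2 * nrm2 u = a ^+ 2.
  rewrite /k expr_div_n sqr_sqrtr ?ltW //; field; exact: lt0r_neq0.
exists (C + k *: u); rewrite ellipse_memP addrC addKr ell_form_cross nrm2Z crossZl cross_uw.
by rewrite k2 mulr0 expr0n addr0 mulrC.
Qed.

Lemma ellipse_chord Y e t1 t2 : t1 != t2 -> S (Y + t1 *: e) -> S (Y + t2 *: e) ->
  (t2 - t1) ^+ 2 * ell_form a w e ^+ 2 =
  4 * (a ^+ 2 * m) * (ell_form a w e - cross (Y - C) e ^+ 2).
Proof.
move=> t12; rewrite !ellipse_line_memP => root1 root2.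
have [-> _] := quadratic_roots t12 root1 root2.
have := ell_polar_discr a w (Y - C) e.
set P := ell_polar _ _ _ _; set fy := ell_form a w (Y - C); set fe := ell_form a w e.
set K := a ^+ 2 * m; set c := cross _ _ => discr.
apply/eqP; rewrite -subr_eq0 (_ : _ - _ = 4 * (P ^+ 2 - fy * fe - - K * c ^+ 2)).
  by rewrite discr subrr mulr0.
by ring.
Qed.

Lemma ellipse_focal_chord e t1 t2 : t1 != t2 -> S (F + t1 *: e) -> S (F + t2 *: e) ->
  (t2 - t1) ^+ 2 * ell_form a w e ^+ 2 = 4 * a ^+ 2 * m ^+ 2 * nrm2 e.
Proof.
move=> t12 S1 S2; rewrite (ellipse_chord t12 S1 S2) focus_sub_center.
by rewrite ell_form_cross [cross w e]crossC sqrrN; ring.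
Qed.

Lemma ellipse_focal_chord_exists e : e != 0 ->
  exists t1 t2, [/\ t1 < 0, 0 < t2, S (F + t1 *: e) & S (F + t2 *: e)].
Proof.
move=> e_neq0.
have const_lt0 : ell_form a w (F - C) - a ^+ 2 * m < 0.
  by rewrite subr_lt0 focus_sub_center ellipse_focus_inner.
have [t1 [t2 [t1_lt0 t2_gt0 root1 root2]]] :=
  quadratic_roots_opposite (2 * ell_polar a w (F - C) e) (ellipse_form_gt0 e_neq0) const_lt0.
by exists t1, t2; split => //; apply/ellipse_line_memP.
Qed.

Lemma ellipse_inner_on_chord P X e t1 t2 :
  ell_form a w (P - C) < a ^+ 2 * m -> cross (X - P) e = 0 -> e != 0 -> t1 < t2 ->
  S (X + t1 *: e) -> S (X + t2 *: e) -> on_segment (X + t1 *: e) (X + t2 *: e) P.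
Proof.
move=> P_inner cross0 e_neq0 t12.
have [tau X_eq] := cross_eq0_collinear e_neq0 cross0.
have shift t : X + t *: e = P + (t + tau) *: e.
  by rewrite -(subrK P X) X_eq; apply: point_eq; rewrite !coordE; ring.
rewrite !shift !ellipse_line_memP => root1 root2.
have s12 : t1 + tau != t2 + tau by rewrite lt_eqF // ltrD2r.
have [_ prod12] := quadratic_roots s12 root1 root2.
have : (t1 + tau) * (t2 + tau) < 0.
  by rewrite -(pmulr_rlt0 _ (ellipse_form_gt0 e_neq0)) prod12 subr_lt0.
by move=> prod_lt0; apply: on_segment_line; nra.
Qed.

Lemma ellipse_focal_length_chord X e t1 t2 : e != 0 -> t1 < t2 ->
  S (X + t1 *: e) -> S (X + t2 *: e) ->
  (t2 - t1) ^+ 2 * ell_form a w e ^+ 2 = 4 * a ^+ 2 * m ^+ 2 * nrm2 e ->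
  on_segment (X + t1 *: e) (X + t2 *: e) F \/ on_segment (X + t1 *: e) (X + t2 *: e) F'.
Proof.
move=> e_neq0 t12 S1 S2 focal_len.
have t12_neq : t1 != t2 by rewrite lt_eqF.
have := ellipse_chord t12_neq S1 S2; rewrite focal_len ell_form_cross => chord_len.
have : cross (X - C) e ^+ 2 = cross w e ^+ 2.
  have am_neq0 : 4 * (a ^+ 2 * m) != 0.
    by rewrite !mulf_neq0 ?expf_neq0 ?gt_eqF ?ellipse_a_gt0 ?ellipse_minor2_gt0.
  apply: (mulfI am_neq0); rewrite [cross w e]crossC sqrrN.
  by apply: (addrI (4 * a ^+ 2 * m ^+ 2 * nrm2 e)); rewrite {1}chord_len; ring.
move/eqP; rewrite eqf_sqr => /orP[] /eqP cross_eq.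
  left; apply: ellipse_inner_on_chord => //.
    by rewrite focus_sub_center ellipse_focus_inner.
  by rewrite -(subrKA C) -(opprB F C) crossBl focus_sub_center cross_eq subrr.
right; apply: ellipse_inner_on_chord => //.
  by rewrite focus'_sub_center ell_formN ellipse_focus_inner.
by rewrite -(subrKA C) -(opprB F' C) crossBl focus'_sub_center crossNl cross_eq subrr.
Qed.

End Ellipse.

Section EllipseUniqueness.
Variable R : rcfType.
Variables (S : point R -> Prop) (F F' G G' : point R) (a b : R).
Hypotheses (hF : is_ellipse_with S F F' a) (hG : is_ellipse_with S G G' b).

Lemma ellipse_with_center_unique : F + F' = G + G'.
Proof.
have [Z [SZ _]] := ellipse_vertex hF.
by apply: (ellipse_center_unique hG SZ) => Y SY; exact (ellipse_sym hF SY).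
Qed.

Lemma ellipse_with_axis_le : a ^+ 2 <= b ^+ 2.
Proof.
have [Z [SZ <-]] := ellipse_vertex hF.
by rewrite /center ellipse_with_center_unique; exact (ellipse_nrm2_le hG SZ).
Qed.

End EllipseUniqueness.

Lemma ellipse_with_axis_unique (R : rcfType) (S : point R -> Prop) (F F' G G' : point R) a b :
  is_ellipse_with S F F' a -> is_ellipse_with S G G' b -> a = b.
Proof.
move=> hF hG; apply/eqP.
rewrite -(@eqrXn2 _ 2) ?ltW ?(ellipse_a_gt0 hF) ?(ellipse_a_gt0 hG) // eq_le.
by rewrite (ellipse_with_axis_le hF hG) (ellipse_with_axis_le hG hF).
Qed.

Section AffineImage.
Variable R : rcfType.
Variables (A : 'M[R]_2) (b : point R).
Implicit Types (u v Y Z e : point R) (t : R).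
Local Notation g := (affine_map A b).

Lemma affine_map_line Y t e : g (Y + t *: e) = g Y + t *: (e *m A).
Proof. by rewrite /affine_map mulmxDl -scalemxAl addrAC. Qed.

Lemma affine_mapB u v : g u - g v = (u - v) *m A.
Proof. by apply: point_eq; rewrite /affine_map !coordE; ring. Qed.

Lemma affine_map_sym (F F' : point R) Z : g (F + F' - Z) = g F + g F' - g Z.
Proof. by apply: point_eq; rewrite /affine_map !coordE; ring. Qed.

Lemma affine_map_center (F F' : point R) : g (center F F') = center (g F) (g F').
Proof. by apply: point_eq; rewrite /affine_map /center !coordE; field. Qed.

Variables (S : point R -> Prop) (F F' G G' : point R) (a a' : R).
Hypotheses (hS : is_ellipse_with S F F' a) (hgS : is_ellipse_with (image_set g S) G G' a').

Local Notation w := (focal_vec F F').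
Local Notation w' := (focal_vec G G').
Local Notation m := (minor2 a w).
Local Notation m' := (minor2 a' w').

Lemma image_ellipse_center : center G G' = g (center F F').
Proof.
have [Z [SZ _]] := ellipse_vertex hS.
have gSZ : image_set g S (g Z) by exists Z.
have sym_gS Y : image_set g S Y -> image_set g S (g F + g F' - Y).
  case=> Z' [SZ' ->]; exists (F + F' - Z'); rewrite affine_map_sym.
  by split => //; exact (ellipse_sym hS SZ').
by rewrite affine_map_center /center (ellipse_center_unique hgS gSZ sym_gS).
Qed.

Lemma image_ell_form e :
  ell_form a' w' (e *m A) * (a ^+ 2 * m) = ell_form a w e * (a' ^+ 2 * m').
Proof.
have [-> | e_neq0] := eqVneq e 0.
  by rewrite mul0mx /ell_form /nrm2 /dot !coordE; ring.
have fe_gt0 := ellipse_form_gt0 hS e_neq0.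
have K_gt0 : 0 < a ^+ 2 * m.
  by rewrite mulr_gt0 ?exprn_gt0 ?(ellipse_a_gt0 hS) ?(ellipse_minor2_gt0 hS).
set s := Num.sqrt (a ^+ 2 * m / ell_form a w e).
have s2 : s ^+ 2 * ell_form a w e = a ^+ 2 * m.
  by rewrite sqr_sqrtr ?divr_ge0 ?ltW //; field; rewrite gt_eqF.
have gS_s : image_set g S (center G G' + s *: (e *m A)).
  exists (center F F' + s *: e); rewrite image_ellipse_center affine_map_line.
  by rewrite (ellipse_memP hS) addrC addKr ell_formZ.
move: gS_s; rewrite (ellipse_memP hgS) addrC addKr ell_formZ => s2'.
by rewrite -s2 -s2'; ring.
Qed.

Lemma focal_chord_image_axis u v : S u -> S v -> u != v -> on_segment u v F ->
  on_segment (g u) (g v) G -> a' ^+ 2 * nrm2 (v - u) = a ^+ 2 * nrm2 ((v - u) *m A).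
Proof.
move=> Su Sv uv segF segG.
have [t [uE vE]] := on_segment_decomp segF.
have [t' [guE gvE]] := on_segment_decomp segG.
rewrite affine_mapB in guE gvE.
have params_neq t0 : - t0 != 1 - t0 by rewrite eq_sym -subr_eq0 opprK subrK oner_neq0.
have unit_gap t0 : 1 - t0 - - t0 = 1 by rewrite opprK subrK.
have SuF : S (F + (- t) *: (v - u)) by rewrite -uE.
have SvF : S (F + (1 - t) *: (v - u)) by rewrite -vE.
have gSuG : image_set g S (G + (- t') *: ((v - u) *m A)) by rewrite -guE; exists u.
have gSvG : image_set g S (G + (1 - t') *: ((v - u) *m A)) by rewrite -gvE; exists v.
have := ellipse_focal_chord hS (params_neq t) SuF SvF.
have := ellipse_focal_chord hgS (params_neq t') gSuG gSvG.
rewrite !unit_gap !expr1n !mul1r => focal' focal.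
have nz : 4 * a ^+ 2 * a' ^+ 2 * m ^+ 2 * m' ^+ 2 != 0.
  by rewrite !mulf_neq0 ?expf_neq0 ?gt_eqF ?(ellipse_a_gt0 hS) ?(ellipse_a_gt0 hgS)
    ?(ellipse_minor2_gt0 hS) ?(ellipse_minor2_gt0 hgS).
apply: (mulfI nz).
transitivity ((ell_form a w (v - u) * (a' ^+ 2 * m')) ^+ 2); first by rewrite exprMn focal; ring.
by rewrite -image_ell_form exprMn focal'; ring.
Qed.

Lemma focal_chord_image_through_focus e : e != 0 ->
  a' ^+ 2 * nrm2 e = a ^+ 2 * nrm2 (e *m A) ->
  exists t1 t2, [/\ t1 < 0, 0 < t2, S (F + t1 *: e), S (F + t2 *: e) &
    on_segment (g (F + t1 *: e)) (g (F + t2 *: e)) G \/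
    on_segment (g (F + t1 *: e)) (g (F + t2 *: e)) G'].
Proof.
move=> e_neq0 axis.
have eA_neq0 : e *m A != 0.
  apply/eqP => eA0; move: axis; rewrite eA0 (_ : nrm2 0 = 0) ?mulr0; last first.
    by rewrite /nrm2 /dot !coordE mulr0 addr0.
  by move/eqP; rewrite mulf_eq0 expf_eq0 /= !gt_eqF ?nrm2_gt0 ?(ellipse_a_gt0 hgS).
have [t1 [t2 [t1_lt0 t2_gt0 S1 S2]]] := ellipse_focal_chord_exists hS e_neq0.
have t12 : t1 < t2 by lra.
have t12_neq : t1 != t2 by rewrite lt_eqF.
have focal := ellipse_focal_chord hS t12_neq S1 S2.
exists t1, t2; split => //.
have gS t : S (F + t *: e) -> image_set g S (g F + t *: (e *m A)).
  by move=> St; exists (F + t *: e); rewrite affine_map_line.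
rewrite !affine_map_line; apply: (ellipse_focal_length_chord hgS eA_neq0 t12 (gS _ S1) (gS _ S2)).
have nz : (a ^+ 2 * m) ^+ 2 != 0.
  by rewrite expf_neq0 // mulf_neq0 ?expf_neq0 ?gt_eqF ?(ellipse_a_gt0 hS) ?(ellipse_minor2_gt0 hS).
apply: (mulfI nz).
transitivity ((t2 - t1) ^+ 2 * (ell_form a' w' (e *m A) * (a ^+ 2 * m)) ^+ 2); first by ring.
rewrite image_ell_form.
transitivity ((t2 - t1) ^+ 2 * ell_form a w e ^+ 2 * (a' ^+ 2 * m') ^+ 2); first by ring.
rewrite focal; transitivity (4 * a ^+ 2 * m ^+ 2 * m' ^+ 2 * a' ^+ 2 * (a' ^+ 2 * nrm2 e)).
  by ring.
by rewrite axis; ring.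
Qed.

End AffineImage.

Section FocalChordPreserved.
Variable R : rcfType.

Definition focal_chord_preserved (S : point R -> Prop) (g : point R -> point R) (d : point R) :=
  exists F u v, is_focus S F /\ is_chord S u v /\ on_segment u v F /\ parallel (v - u) d /\
    exists G, is_focus (image_set g S) G /\ on_segment (g u) (g v) G.

Variables (S : point R -> Prop) (F F' : point R) (a : R) (A : 'M[R]_2) (b d : point R).
Hypotheses (hS : is_ellipse_with S F F' a) (d_neq0 : d != 0).
Local Notation g := (affine_map A b).

Lemma focal_chord_preservedP : focal_chord_preserved S g d <->
  exists G G' a', is_ellipse_with (image_set g S) G G' a' /\
    a' ^+ 2 * nrm2 d = a ^+ 2 * nrm2 (d *m A).
Proof.
split.
  case=> F0 [u [v [[F0' [a0 hF0]] [[Su [Sv uv]] [segF [[k vu] [G [[G' [a' hG]] segG]]]]]]]].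
  exists G, G', a'; split => //.
  have := focal_chord_image_axis hF0 hG Su Sv uv segF segG.
  rewrite (ellipse_with_axis_unique hF0 hS) vu nrm2Z -scalemxAl nrm2Z => axis.
  have k_neq0 : k ^+ 2 != 0.
    rewrite expf_neq0 //; apply: contra_neq uv => k0.
    by apply/eqP; rewrite -subr_eq0 -oppr_eq0 opprB vu k0 scale0r.
  by apply: (mulfI k_neq0); rewrite mulrCA axis mulrCA.
case=> G [G' [a' [hG axis]]].
have [t1 [t2 [t1_lt0 t2_gt0 S1 S2 segG]]] := focal_chord_image_through_focus hS hG d_neq0 axis.
have vu : F + t2 *: d - (F + t1 *: d) = (t2 - t1) *: d.
  by rewrite opprD addrACA subrr add0r scalerBl.
exists F, (F + t1 *: d), (F + t2 *: d); split; first by exists F', a.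
split.
  do 2!split => //; apply/eqP => eq12.
  move: vu; rewrite eq12 subrr => /esym/eqP; rewrite scaler_eq0 subr_eq0 (negbTE d_neq0) orbF.
  by move/eqP => t21; have := lt_trans t1_lt0 t2_gt0; rewrite t21 ltxx.
split; first by apply: on_segment_line; lra.
split; first by exists (t2 - t1).
case: segG => segG; first by exists G; split => //; exists G', a'.
by exists G'; split => //; exists G, a'; apply: is_ellipse_with_swap.
Qed.

End FocalChordPreserved.

Unset Implicit Arguments.
Theorem proposition6 (R : rcfType) (F1 F2 : 'rV[R]_2) (a : R)
  (hE : dist F1 F2 < 2 * a)
  (p q : 'rV[R]_2) (hc : is_chord (ellipse F1 F2 a) p q)
  (A : 'M[R]_2) (b : 'rV[R]_2) (hA : A \in unitmx) :
  let E := ellipse F1 F2 a in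
  let g := affine_map A b in
  let gE := image_set g E in
  (* (1) a focal chord of E parallel to c is mapped to a focal chord of g(E) *)
  let P1 := exists F u v, is_focus E F /\ is_chord E u v /\ on_segment u v F /\
              parallel (v - u) (q - p) /\
              exists G, is_focus gE G /\ on_segment (g u) (g v) G in
  (* (2) length of c preserved *)
  let P2 := dist (g p) (g q) = dist p q in
  (* (3) major axis length preserved *)
  let P3 := major_axis_length gE (2 * a) in
  [/\ (P1 /\ P2 -> P3), (P1 /\ P3 -> P2) & (P2 /\ P3 -> P1)].
Proof.
move=> E g gE P1 P2 P3.
have hS : is_ellipse_with E F1 F2 a by [].
have d_neq0 : q - p != 0 by case: hc => _ [_]; rewrite subr_eq0 eq_sym.
have a_gt0 := ellipse_a_gt0 hS.
have P1E : P1 <-> _ := focal_chord_preservedP A b hS d_neq0.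
have P2E : P2 <-> nrm2 ((q - p) *m A) = nrm2 (q - p).
  rewrite /P2 !dist_nrm2 affine_mapB -opprB mulNmx !nrm2N.
  by split => [/eqP | ->]; rewrite ?eqr_sqrt ?nrm2_ge0 // => /eqP.
have P3E : P3 <-> exists G G', is_ellipse_with gE G G' a.
  by rewrite /P3 /major_axis_length (_ : 2 * a / 2 = a) //; field.
split.
- case=> /P1E [G [G' [a' [hG axis]]]] /P2E isom.
  apply/P3E; exists G, G'; suff -> : a = a' by [].
  move: axis; rewrite isom => /(mulIf (lt0r_neq0 (nrm2_gt0 d_neq0))) /eqP.
  by rewrite eqrXn2 ?ltW ?(ellipse_a_gt0 hG) // => /eqP.
- case=> /P1E [G [G' [a' [hG axis]]]] /P3E [G1 [G2 hG1]].
  apply/P2E; apply: (mulfI (expf_neq0 2 (lt0r_neq0 a_gt0))).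
  by rewrite -axis (ellipse_with_axis_unique hG hG1).
- case=> /P2E isom /P3E [G [G' hG]].
  by apply/P1E; exists G, G', a; rewrite isom.
Qed.
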